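(* Let $n\ge 2$, $k\ge 1$, and let $f_i(x)=\frac12 a_ix^2-b_ix$ ($i=1,\dots,n$) be univariate functions satisfying Assumption (B) with parameters $\lambda,L,G$, where $F(x)=\frac1n\sum_{i=1}^n f_i(x)=\frac{\lambda}{2}x^2-bx$. Assume $\frac{L}{\lambda}\le \frac{nk}{\log(n^{1/2}k)}$. Then SGD with single shuffling, run for $k$ epochs from an arbitrary $x_0\in\mathbb{R}$ with constant step size $\eta=\frac{\log(n^{1/2}k)}{\lambda nk}$, satisfies \[ \mathbb{E}\Big[F(x_k)-\inf_xF(x)\Big]\;\le\;\tilde{O}\left(\frac{\lambda}{nk^2}(x_0-x^* )^2+\frac{G^2L^2}{\lambda^3nk^2}\right), \] where $x^*=\arg\min_x F(x)$, the expectation is over the uniformly random permutation, and $\tilde O(\cdot)$ hides a universal multiplicative constant and factors polylogarithmic in $n$ and $k$.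
   Context: Assumption (B) (parameters $\lambda,L,G>0$): $F(x)=\frac1n\sum_{i=1}^nf_i(x)$ is $\lambda$-strongly convex on $\mathbb{R}$; each $f_i(x)=\frac{a_i}{2}x^2-b_ix$ is convex (i.e. $a_i\ge 0$), has $L$-Lipschitz derivative (i.e. $a_i\le L$), and satisfies $|f_i'(x^* )|\le G$ where $x^*=\arg\min_xF(x)$. SGD with single shuffling: one uniformly random permutation $\sigma$ of $\{1,\dots,n\}$ is drawn once; then for each of $k$ epochs, perform the updates $x\leftarrow x-\eta f_{\sigma(j)}'(x)$ for $j=1,\dots,n$ in order; $x_t$ is the iterate at the end of epoch $t$. *)

From Stdlib Require Import Reals Lra Lia List Permutation.
Open Scope R_scope.

Definition sumR (n : nat) (g : nat -> R) : R :=
  fold_right (fun i acc => g i + acc) 0 (seq 0 n).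

(* f_i(x) = a_i/2 x^2 - b_i x and its derivative. Components are indexed 0..n-1. *)
Definition fcomp (a b : nat -> R) (i : nat) (x : R) : R := a i / 2 * x ^ 2 - b i * x.
Definition dfcomp (a b : nat -> R) (i : nat) (x : R) : R := a i * x - b i.

Definition Fobj (n : nat) (a b : nat -> R) (x : R) : R :=
  / INR n * sumR n (fun i => fcomp a b i x).

(* One epoch of SGD along the order given by the list sigma
   (sigma = [sigma(1); ...; sigma(n)]): x <- x - eta f'_{sigma(j)}(x), j = 1..n in order. *)
Definition epoch (a b : nat -> R) (eta : R) (sigma : list nat) (x : R) : R :=
  fold_left (fun y i => y - eta * dfcomp a b i y) sigma x.

Fixpoint sgd_ss (a b : nat -> R) (eta : R) (sigma : list nat) (k : nat) (x0 : R) : R :=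
  match k with
  | O => x0
  | S k' => epoch a b eta sigma (sgd_ss a b eta sigma k' x0)
  end.

Definition perm_enum (n : nat) (P : list (list nat)) : Prop :=
  NoDup P /\ forall l, In l P <-> Permutation (seq 0 n) l.

Definition avg (P : list (list nat)) (g : list nat -> R) : R :=
  fold_right (fun l acc => g l + acc) 0 P / INR (length P).

(* Write e = x - x* and g_i = f_i'(x* ), so that sum_i g_i = 0.  Because every
   f_i is quadratic, one epoch along the order sigma is an affine map
   e |-> Q e + W with Q = prod_j (1 - eta a_(sigma j)); after k epochs
   e_k = Q^k e_0 + W (1 + Q + ... + Q^(k-1)).
   (1) Contraction: Q <= exp (- eta sum_i a_i) = exp (- eta n lam), hence with the
       prescribed step size Q^k <= 1 / (sqrt n k).
   (2) Offset: as sum_i g_i = 0, Abel summation writes W = eta^2 R where, by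
       Cauchy-Schwarz, R^2 <= L^2 n sum_j S_j^2 and S_j is the j-th prefix sum
       of g along sigma.
   (3) Sampling without replacement: for a uniformly random permutation the
       products g_(sigma a) g_(sigma b), a <> b, have nonpositive mean, so
       E [S_j^2] <= j G^2 and E [sum_j S_j^2] <= n^2 G^2.
   Since F x - F x* = lam/2 e^2, the bound follows with constant 1 and the
   log factor ln (sqrt n k)^4 <= (1 + ln (n k))^4.  The file develops list
   sums, the exchangeability facts (3), the epoch algebra (1)-(2), their
   combination into an expected-gap bound valid for any step size with
   eta L <= 1, the identification of the quadratic objective and the
   step-size arithmetic, and finally derives the theorem. *)

From Stdlib Require Import Reals Lra Lia List Permutation.
Open Scope R_scope.

Definition Lsum {A : Type} (h : A -> R) (l : list A) : R :=
  fold_right (fun x acc => h x + acc) 0 l.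

Lemma sumR_Lsum n h : sumR n h = Lsum h (seq 0 n).
Proof. reflexivity. Qed.

Lemma Lsum_app {A} (h : A -> R) l1 l2 : Lsum h (l1 ++ l2) = Lsum h l1 + Lsum h l2.
Proof. induction l1 as [|x l1 IH]; simpl; [lra|]. unfold Lsum in *; simpl; rewrite IH; lra. Qed.

Lemma Lsum_perm {A} (h : A -> R) l l' : Permutation l l' -> Lsum h l = Lsum h l'.
Proof. induction 1; unfold Lsum in *; simpl; lra. Qed.

Lemma Lsum_le {A} (h h' : A -> R) l :
  (forall x, In x l -> h x <= h' x) -> Lsum h l <= Lsum h' l.
Proof.
  induction l as [|x l IH]; intros H; simpl; [lra|].
  assert (h x <= h' x) by (apply H; left; reflexivity).
  assert (Lsum h l <= Lsum h' l) by (apply IH; intros; apply H; right; assumption).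
  unfold Lsum in *; lra.
Qed.

Lemma Lsum_ext {A} (h h' : A -> R) l :
  (forall x, In x l -> h x = h' x) -> Lsum h l = Lsum h' l.
Proof. intros H; apply Rle_antisym; apply Lsum_le; intros x Hx; rewrite (H x Hx); lra. Qed.

Lemma Lsum_plus {A} (h h' : A -> R) l : Lsum (fun x => h x + h' x) l = Lsum h l + Lsum h' l.
Proof. induction l as [|x l IH]; unfold Lsum in *; simpl; [lra|]. rewrite IH; lra. Qed.

Lemma Lsum_scal {A} (c : R) (h : A -> R) l : Lsum (fun x => c * h x) l = c * Lsum h l.
Proof. induction l as [|x l IH]; unfold Lsum in *; simpl; [lra|]. rewrite IH; lra. Qed.

Lemma Lsum_const {A} (c : R) (l : list A) : Lsum (fun _ => c) l = INR (length l) * c.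
Proof.
  induction l as [|x l IH]; [simpl; lra|].
  simpl length; rewrite S_INR; unfold Lsum in *; simpl; rewrite IH; lra.
Qed.

Lemma Lsum_map {A B} (h : B -> R) (f : A -> B) l : Lsum h (map f l) = Lsum (fun x => h (f x)) l.
Proof. induction l as [|x l IH]; unfold Lsum in *; simpl; [lra|]. rewrite IH; lra. Qed.

Lemma Lsum_exch {A B} (h : A -> B -> R) l1 l2 :
  Lsum (fun x => Lsum (fun y => h x y) l2) l1 = Lsum (fun y => Lsum (fun x => h x y) l1) l2.
Proof.
  induction l1 as [|x l1 IH].
  - change (0 = Lsum (fun _ => 0) l2). rewrite Lsum_const; lra.
  - change (Lsum (fun y => h x y) l2 + Lsum (fun x => Lsum (fun y => h x y) l2) l1 =
            Lsum (fun y => h x y + Lsum (fun x => h x y) l1) l2).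
    rewrite (Lsum_plus (fun y => h x y)), IH; lra.
Qed.

Lemma Lsum_nonneg {A} (h : A -> R) l : (forall x, In x l -> 0 <= h x) -> 0 <= Lsum h l.
Proof.
  intros H. replace 0 with (Lsum (fun _ : A => 0) l) by (rewrite Lsum_const; lra).
  apply Lsum_le; auto.
Qed.

Lemma Lsum_sq {A} (h : A -> R) l :
  Lsum h l ^ 2 = Lsum (fun x => Lsum (fun y => h x * h y) l) l.
Proof.
  replace (Lsum h l ^ 2) with (Lsum h l * Lsum h l) by ring. rewrite <- Lsum_scal.
  apply Lsum_ext; intros x _; rewrite Rmult_comm, <- Lsum_scal; reflexivity.
Qed.

Lemma sumR_S_r m h : sumR (S m) h = sumR m h + h m.
Proof. rewrite !sumR_Lsum, seq_S, Lsum_app. unfold Lsum at 2; simpl; lra. Qed.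

Lemma sumR_S_l m h : sumR (S m) h = h 0%nat + sumR m (fun i => h (S i)).
Proof. rewrite !sumR_Lsum, <- (Lsum_map h S), seq_shift. reflexivity. Qed.

Lemma sumR_ext m h h' : (forall i, (i < m)%nat -> h i = h' i) -> sumR m h = sumR m h'.
Proof. intros H; apply Lsum_ext; intros x Hx; apply in_seq in Hx; apply H; lia. Qed.

Lemma sumR_const m c : sumR m (fun _ => c) = INR m * c.
Proof. rewrite sumR_Lsum, Lsum_const, length_seq; reflexivity. Qed.

Lemma sumR_delta m j0 z : (j0 < m)%nat -> sumR m (fun j => if Nat.eqb j j0 then z else 0) = z.
Proof.
  induction m as [|m IH]; intros H; [lia|]. rewrite sumR_S_r.
  destruct (Nat.eqb_spec m j0) as [->|Hne].
  - rewrite (sumR_ext _ _ (fun _ => 0)), sumR_const; [lra|].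
    intros i Hi; destruct (Nat.eqb_spec i j0); [lia|reflexivity].
  - rewrite IH by lia; lra.
Qed.

Lemma sumR_nth (h : nat -> R) l : sumR (length l) (fun j => h (nth j l O)) = Lsum h l.
Proof.
  induction l as [|x l IH]; [reflexivity|].
  simpl length; rewrite sumR_S_l; cbn [nth]; rewrite IH; reflexivity.
Qed.

Lemma avg_Lsum (P : list (list nat)) h : avg P h = Lsum h P / INR (length P).
Proof. reflexivity. Qed.

Lemma avg_le P h h' : (0 < length P)%nat ->
  (forall l, In l P -> h l <= h' l) -> avg P h <= avg P h'.
Proof.
  intros HP H; rewrite !avg_Lsum. apply Rmult_le_compat_r.
  - apply Rlt_le, Rinv_0_lt_compat, lt_0_INR; assumption.
  - apply Lsum_le; assumption.
Qed.

Lemma avg_affine P c d h : (0 < length P)%nat ->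
  avg P (fun l => c + d * h l) = c + d * avg P h.
Proof.
  intros HP; assert (0 < INR (length P)) by (apply lt_0_INR; assumption).
  rewrite !avg_Lsum, Lsum_plus, Lsum_const, Lsum_scal; field; lra.
Qed.

Lemma avg_ext P h h' : (forall l, h l = h' l) -> avg P h = avg P h'.
Proof. intros H; rewrite !avg_Lsum, (Lsum_ext h h'); auto. Qed.

(** * Exchangeability of a uniformly random permutation *)

Lemma Lsum_invol {A} (P : list A) (phi : A -> A) (h : A -> R) :
  NoDup P -> (forall l, In l P -> In (phi l) P) -> (forall l, In l P -> phi (phi l) = l) ->
  Lsum (fun l => h (phi l)) P = Lsum h P.
Proof.
  intros ND Hin Hinv. rewrite <- Lsum_map. apply Lsum_perm, NoDup_Permutation; auto.
  - apply NoDup_map_NoDup_ForallPairs; auto. intros x y Hx Hy E.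
    rewrite <- (Hinv x Hx), <- (Hinv y Hy), E; reflexivity.
  - intros x; rewrite in_map_iff; split.
    + intros [y [<- Hy]]; auto.
    + intros Hx; exists (phi x); auto.
Qed.

Definition tr (p q j : nat) : nat := if Nat.eqb j p then q else if Nat.eqb j q then p else j.

Lemma tr_invol p q j : tr p q (tr p q j) = j.
Proof.
  unfold tr; destruct (Nat.eqb_spec j p) as [->|Hjp];
    [|destruct (Nat.eqb_spec j q) as [->|Hjq]].
  - rewrite Nat.eqb_refl; destruct (Nat.eqb_spec q p); lia.
  - rewrite Nat.eqb_refl; reflexivity.
  - destruct (Nat.eqb_spec j p), (Nat.eqb_spec j q); lia.
Qed.

Lemma tr_lt p q j m : (p < m)%nat -> (q < m)%nat -> (j < m)%nat -> (tr p q j < m)%nat.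
Proof. unfold tr; intros; destruct (Nat.eqb_spec j p), (Nat.eqb_spec j q); lia. Qed.

Definition swap_pos (p q : nat) (l : list nat) : list nat :=
  map (fun j => nth (tr p q j) l O) (seq 0 (length l)).

Lemma nth_map_seq {B} (f : nat -> B) m j d : (j < m)%nat -> nth j (map f (seq 0 m)) d = f j.
Proof.
  intros H. rewrite (nth_indep _ d (f O)) by (rewrite length_map, length_seq; auto).
  rewrite map_nth, seq_nth; auto.
Qed.

Lemma map_nth_self l : map (fun j => nth j l O) (seq 0 (length l)) = l.
Proof.
  apply nth_ext with O O; rewrite ?length_map, ?length_seq; [reflexivity|].
  intros j Hj; rewrite nth_map_seq; auto.
Qed.

Lemma swap_pos_length p q l : length (swap_pos p q l) = length l.
Proof. unfold swap_pos; rewrite length_map, length_seq; reflexivity. Qed.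

Lemma swap_pos_nth p q l j : (j < length l)%nat -> nth j (swap_pos p q l) O = nth (tr p q j) l O.
Proof. intros H; unfold swap_pos; rewrite nth_map_seq; auto. Qed.

Lemma swap_pos_invol p q l : (p < length l)%nat -> (q < length l)%nat ->
  swap_pos p q (swap_pos p q l) = l.
Proof.
  intros Hp Hq. apply nth_ext with O O; rewrite !swap_pos_length; [reflexivity|].
  intros j Hj. rewrite swap_pos_nth by (rewrite swap_pos_length; auto).
  rewrite swap_pos_nth by (apply tr_lt; auto). rewrite tr_invol; reflexivity.
Qed.

Lemma swap_pos_perm p q l : (p < length l)%nat -> (q < length l)%nat ->
  Permutation l (swap_pos p q l).
Proof.
  intros Hp Hq.
  assert (Hs : Permutation (seq 0 (length l)) (map (tr p q) (seq 0 (length l)))).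
  { apply NoDup_Permutation; [apply seq_NoDup| |].
    - apply NoDup_map_NoDup_ForallPairs; [|apply seq_NoDup].
      intros x y _ _ E. rewrite <- (tr_invol p q x), <- (tr_invol p q y), E; reflexivity.
    - intros x; rewrite in_map_iff, in_seq; split.
      + intros Hx; exists (tr p q x); rewrite tr_invol, in_seq; split; [reflexivity|].
        split; [lia|]; apply tr_lt; lia.
      + intros [y [<- Hy]]; apply in_seq in Hy; split; [lia|]; apply tr_lt; lia. }
  apply (Permutation_map (fun j => nth j l O)) in Hs.
  rewrite map_nth_self, map_map in Hs. exact Hs.
Qed.

(* Throughout, [P] lists every permutation of 0..n-1 exactly once, so that
   [Lsum _ P] is |P| times the expectation over a uniform random permutation. *)
Section UniformPermutation.
Variable n : nat.
Variable P : list (list nat).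
Hypothesis HP : perm_enum n P.

Lemma P_nonempty : (0 < length P)%nat.
Proof.
  destruct P as [|l P']; [|simpl; lia].
  exfalso; apply (proj2 HP (seq 0 n)), Permutation_refl.
Qed.

Lemma P_len l : In l P -> length l = n.
Proof. intros H; apply HP, Permutation_length in H; rewrite <- H, length_seq; reflexivity. Qed.

Lemma P_elem l i : In l P -> In i l -> (i < n)%nat.
Proof.
  intros Hl Hi; apply HP in Hl.
  apply (Permutation_in _ (Permutation_sym Hl)), in_seq in Hi; lia.
Qed.

Lemma P_nth l i : In l P -> (i < n)%nat -> (nth i l O < n)%nat.
Proof. intros Hl Hi; apply (P_elem l); auto; apply nth_In; rewrite (P_len l Hl); assumption. Qed.

Lemma P_sum (h : nat -> R) l : In l P -> Lsum h l = sumR n h.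
Proof. intros H; apply HP in H; apply Lsum_perm, Permutation_sym; assumption. Qed.

Lemma P_swap_pos p q l : (p < n)%nat -> (q < n)%nat -> In l P -> In (swap_pos p q l) P.
Proof.
  intros Hp Hq H. assert (Hl := P_len l H). apply HP; apply HP in H.
  eapply perm_trans; [exact H|]. apply swap_pos_perm; lia.
Qed.

Lemma P_swap_eq (f : nat -> nat -> R) i p q :
  (i < n)%nat -> (p < n)%nat -> (q < n)%nat -> i <> p -> i <> q ->
  Lsum (fun l => f (nth i l O) (nth p l O)) P = Lsum (fun l => f (nth i l O) (nth q l O)) P.
Proof.
  intros Hi Hp Hq Hip Hiq.
  rewrite <- (Lsum_invol P (swap_pos p q) (fun l => f (nth i l O) (nth q l O))).
  - apply Lsum_ext; intros l Hl. assert (Hl' := P_len l Hl).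
    rewrite !swap_pos_nth by lia. unfold tr.
    destruct (Nat.eqb_spec i p); [lia|]. destruct (Nat.eqb_spec i q); [lia|].
    destruct (Nat.eqb_spec q p) as [->|]; [reflexivity|]. rewrite Nat.eqb_refl; reflexivity.
  - apply HP.
  - intros; apply P_swap_pos; auto.
  - intros l Hl; assert (Hl' := P_len l Hl); apply swap_pos_invol; lia.
Qed.

Section CenteredValues.
Variable g : nat -> R.
Hypothesis Hg0 : sumR n g = 0.
Hypothesis Hn : (2 <= n)%nat.

(* Negative correlation of sampling without replacement: since the values sum
   to 0, the entries at two distinct positions have nonpositive covariance. *)
Lemma P_offdiag i j : (i < n)%nat -> (j < n)%nat -> i <> j ->
  Lsum (fun l => g (nth i l O) * g (nth j l O)) P <= 0.
Proof.
  intros Hi Hj Hij.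
  set (D := Lsum (fun l => g (nth i l O) * g (nth i l O)) P).
  set (E := Lsum (fun l => g (nth i l O) * g (nth j l O)) P).
  assert (HD : 0 <= D) by (apply Lsum_nonneg; intros; nra).
  assert (Hrow : Lsum (fun l => Lsum (fun m => g (nth i l O) * g (nth m l O)) (seq 0 n)) P = 0).
  { rewrite (Lsum_ext _ (fun _ => 0)) by
      (intros l Hl; rewrite Lsum_scal, <- sumR_Lsum, <- (P_len l Hl), sumR_nth,
         P_sum, Hg0 by assumption; ring).
    rewrite Lsum_const; ring. }
  (* Row i of the position-covariance matrix sums to 0; its diagonal entry is D
     and, by exchangeability, each of its n - 1 other entries equals E. *)
  assert (Hsplit : Lsum (fun l => Lsum (fun m => g (nth i l O) * g (nth m l O)) (seq 0 n)) P
                   = sumR n (fun m => (if Nat.eqb m i then D - E else 0) + E)).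
  { rewrite Lsum_exch, sumR_Lsum. apply Lsum_ext; intros m Hm; apply in_seq in Hm.
    destruct (Nat.eqb_spec m i) as [->|]; [unfold D, E; ring|].
    rewrite Rplus_0_l; destruct (Nat.eqb_spec m j) as [->|]; [reflexivity|].
    apply (P_swap_eq (fun x y => g x * g y)); lia. }
  rewrite sumR_Lsum, Lsum_plus, <- !sumR_Lsum, sumR_delta, sumR_const in Hsplit by assumption.
  assert (2 <= INR n) by (replace 2 with (INR 2) by (simpl; lra); apply le_INR; assumption).
  fold E; nra.
Qed.

Variable G2 : R.
Hypothesis HG : forall i, (i < n)%nat -> g i ^ 2 <= G2.

Definition prefix (l : list nat) (j : nat) : R := sumR j (fun i => g (nth i l O)).

Lemma prefix_second_moment j : (j <= n)%nat ->
  Lsum (fun l => prefix l j ^ 2) P <= INR j * G2 * INR (length P).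
Proof.
  intros Hj.
  rewrite (Lsum_ext _ (fun l => Lsum (fun x => Lsum (fun y =>
             g (nth x l O) * g (nth y l O)) (seq 0 j)) (seq 0 j)))
    by (intros l _; unfold prefix; rewrite sumR_Lsum, Lsum_sq; reflexivity).
  rewrite Lsum_exch.
  replace (INR j * G2 * INR (length P)) with (Lsum (fun _ : nat => G2 * INR (length P)) (seq 0 j))
    by (rewrite Lsum_const, length_seq; ring).
  apply Lsum_le; intros i Hi; apply in_seq in Hi. rewrite Lsum_exch.
  rewrite <- (sumR_delta j i (G2 * INR (length P))) by lia.
  apply Lsum_le; intros i' Hi'; apply in_seq in Hi'.
  destruct (Nat.eqb_spec i' i) as [->|Hne].
  - rewrite Rmult_comm, <- Lsum_const. apply Lsum_le; intros l Hl.
    assert (H := HG _ (P_nth l i Hl ltac:(lia))); simpl in H; lra.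
  - apply P_offdiag; lia.
Qed.

Lemma prefix_energy : avg P (fun l => sumR n (fun j => prefix l j ^ 2)) <= INR n ^ 2 * G2.
Proof.
  assert (HP0 := P_nonempty). assert (HPR : 0 < INR (length P)) by (apply lt_0_INR; auto).
  assert (HG2 : 0 <= G2) by (assert (H := HG 0%nat ltac:(lia)); nra).
  rewrite avg_Lsum; apply Rmult_le_reg_r with (INR (length P)); [assumption|].
  unfold Rdiv; rewrite Rmult_assoc, Rinv_l, Rmult_1_r by lra.
  rewrite (Lsum_ext _ (fun l => Lsum (fun j => prefix l j ^ 2) (seq 0 n))), Lsum_exch
    by reflexivity.
  replace (INR n ^ 2 * G2 * INR (length P))
    with (Lsum (fun _ : nat => INR n * G2 * INR (length P)) (seq 0 n))
    by (rewrite Lsum_const, length_seq; ring).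
  apply Lsum_le; intros j Hj; apply in_seq in Hj.
  eapply Rle_trans; [apply prefix_second_moment; lia|].
  apply Rmult_le_compat_r; [lra|]. apply Rmult_le_compat_r; [assumption|].
  apply le_INR; lia.
Qed.

End CenteredValues.
End UniformPermutation.

(** * One epoch of SGD on quadratic components *)

(* Cauchy-Schwarz with one extra term: the inductive step for the offset bound. *)
Lemma cauchy_schwarz_step c m x y u v : 0 <= c -> 0 <= m -> 0 <= v ->
  x ^ 2 <= c * u -> y ^ 2 <= c * m * v -> (x + y) ^ 2 <= c * (m + 1) * (u + v).
Proof.
  intros Hc Hm Hv Hx Hy. destruct (Rle_lt_or_eq_dec 0 m Hm) as [Hm'|<-].
  - assert (m * (x + y) ^ 2 <= m * (m + 1) * x ^ 2 + (m + 1) * y ^ 2)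
      by (assert (0 <= (m * x - y) ^ 2) by apply pow2_ge_0; nra).
    apply Rmult_le_reg_l with m; [assumption|]. nra.
  - assert (y = 0) by nra. subst y. nra.
Qed.

Lemma exp_pow x k : exp x ^ k = exp (INR k * x).
Proof.
  induction k as [|k IH]; simpl pow; [simpl; rewrite Rmult_0_l, exp_0; ring|].
  rewrite IH, S_INR, <- exp_plus; f_equal; ring.
Qed.

Section QuadraticEpoch.
Variables (a b : nat -> R) (eta xs : R).
Let g i := dfcomp a b i xs.

(* Along the order l an epoch maps e = x - xs to [factor l * e + offset l]. *)
Fixpoint factor (l : list nat) : R :=
  match l with nil => 1 | i :: l' => (1 - eta * a i) * factor l' end.
Fixpoint offset (l : list nat) : R :=
  match l with nil => 0 | i :: l' => offset l' - eta * g i * factor l' end.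
Fixpoint geom (q : R) (k : nat) : R :=
  match k with O => 0 | S k' => 1 + q * geom q k' end.
(* Abel-summation remainder [abel_rem s l] and the prefix-sum energy [prefix_sq_sum s l],
   where [s] is the sum of the values of [g] already visited. *)
Fixpoint abel_rem (s : R) (l : list nat) : R :=
  match l with nil => 0 | i :: l' => s * a i * factor l' + abel_rem (s + g i) l' end.
Fixpoint prefix_sq_sum (s : R) (l : list nat) : R :=
  match l with nil => 0 | i :: l' => s ^ 2 + prefix_sq_sum (s + g i) l' end.

Lemma epoch_err l : forall x, epoch a b eta l x - xs = factor l * (x - xs) + offset l.
Proof.
  induction l as [|i l IH]; intros x; unfold epoch in *; simpl; [ring|].
  rewrite IH; unfold g, dfcomp; ring.
Qed.

Lemma sgd_err l k x0 :
  sgd_ss a b eta l k x0 - xs = factor l ^ k * (x0 - xs) + offset l * geom (factor l) k.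
Proof.
  induction k as [|k IH]; simpl; [ring|].
  rewrite epoch_err, IH; ring.
Qed.

Lemma geom_bound q k : 0 <= q <= 1 -> 0 <= geom q k <= INR k.
Proof. intros Hq; induction k as [|k IH]; simpl geom; [simpl; lra|]. rewrite S_INR; nra. Qed.

Lemma offset_abel l : forall s,
  eta * s * factor l - offset l = eta * (s + Lsum g l) - eta ^ 2 * abel_rem s l.
Proof.
  induction l as [|i l IH]; intros s; unfold Lsum in *; simpl; [ring|].
  specialize (IH (s + g i)). nra.
Qed.

Lemma prefix_sq_sum_nonneg l : forall s, 0 <= prefix_sq_sum s l.
Proof. induction l as [|i l IH]; intros s; simpl; [lra|]. specialize (IH (s + g i)); nra. Qed.

Variable L : R.
Hypothesis Heta : 0 <= eta.
Hypothesis HetaL : eta * L <= 1.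

Lemma step_factor i : 0 <= a i <= L -> 0 <= 1 - eta * a i <= 1.
Proof. intros Hai; split; nra. Qed.

Lemma factor_bound l : (forall i, In i l -> 0 <= a i <= L) -> 0 <= factor l <= 1.
Proof.
  induction l as [|i l IH]; intros H; simpl; [lra|].
  assert (H1 := step_factor i (H i (or_introl eq_refl))).
  assert (0 <= factor l <= 1) by (apply IH; intros; apply H; right; assumption). nra.
Qed.

(* Contraction, using 1 - t <= exp (- t). *)
Lemma factor_exp l : (forall i, In i l -> 0 <= a i <= L) -> factor l <= exp (- (eta * Lsum a l)).
Proof.
  induction l as [|i l IH]; intros H; unfold Lsum in *; simpl.
  - rewrite Rmult_0_r, Ropp_0, exp_0; lra.
  - replace (- (eta * (a i + fold_right (fun x acc => a x + acc) 0 l)))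
      with (- (eta * a i) + - (eta * fold_right (fun x acc => a x + acc) 0 l)) by ring.
    rewrite exp_plus.
    assert (H' : forall j, In j l -> 0 <= a j <= L) by (intros; apply H; right; assumption).
    assert (H1 := exp_ineq1_le (- (eta * a i))). assert (H2 := factor_bound l H').
    assert (H3 := step_factor i (H i (or_introl eq_refl))). assert (H4 := IH H').
    apply Rmult_le_compat; lra.
Qed.

Lemma abel_rem_bound l : (forall i, In i l -> 0 <= a i <= L) ->
  forall s, abel_rem s l ^ 2 <= L ^ 2 * INR (length l) * prefix_sq_sum s l.
Proof.
  induction l as [|i l IH]; intros Ha s; simpl abel_rem; simpl prefix_sq_sum; [simpl; lra|].
  assert (Ha' : forall j, In j l -> 0 <= a j <= L) by (intros; apply Ha; right; assumption).
  assert (Hai := Ha i (or_introl eq_refl)).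
  assert (HQ := factor_bound l Ha').
  simpl length; rewrite S_INR.
  apply cauchy_schwarz_step.
  - apply pow2_ge_0.
  - apply pos_INR.
  - apply prefix_sq_sum_nonneg.
  - assert (0 <= a i * factor l <= L) by nra.
    replace ((s * a i * factor l) ^ 2) with ((a i * factor l) ^ 2 * s ^ 2) by ring.
    apply Rmult_le_compat_r; [apply pow2_ge_0|]. apply pow_incr; lra.
  - apply IH; assumption.
Qed.

Lemma last_iterate_sq_error l k x0 :
  (forall i, In i l -> 0 <= a i <= L) -> Lsum g l = 0 ->
  (sgd_ss a b eta l k x0 - xs) ^ 2
  <= 2 * (factor l ^ k) ^ 2 * (x0 - xs) ^ 2
     + 2 * INR k ^ 2 * eta ^ 4 * (L ^ 2 * INR (length l) * prefix_sq_sum 0 l).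
Proof.
  intros Ha Hg0. rewrite sgd_err.
  assert (HQ := factor_bound l Ha).
  assert (Hgeom := geom_bound (factor l) k HQ).
  assert (HW : offset l = eta ^ 2 * abel_rem 0 l)
    by (assert (H := offset_abel l 0); rewrite Hg0 in H; lra).
  assert (HR := abel_rem_bound l Ha 0).
  set (u := factor l ^ k * (x0 - xs)). set (w := offset l * geom (factor l) k).
  assert (Hw : w ^ 2 <= INR k ^ 2 * eta ^ 4 * (L ^ 2 * INR (length l) * prefix_sq_sum 0 l)).
  { unfold w; rewrite HW.
    replace ((eta ^ 2 * abel_rem 0 l * geom (factor l) k) ^ 2)
      with (geom (factor l) k ^ 2 * eta ^ 4 * abel_rem 0 l ^ 2) by ring.
    assert (geom (factor l) k ^ 2 <= INR k ^ 2) by (apply pow_incr; lra).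
    assert (0 <= eta ^ 4) by (apply pow_le; assumption).
    apply Rmult_le_compat; [| apply pow2_ge_0 | | assumption].
    - apply Rmult_le_pos; [apply pow2_ge_0|assumption].
    - apply Rmult_le_compat_r; assumption. }
  assert (0 <= (u - w) ^ 2) by apply pow2_ge_0.
  replace (2 * (factor l ^ k) ^ 2 * (x0 - xs) ^ 2) with (2 * u ^ 2) by (unfold u; ring). nra.
Qed.

End QuadraticEpoch.

Lemma prefix_sq_sum_eq (a b : nat -> R) xs l : forall s,
  prefix_sq_sum a b xs s l
  = sumR (length l) (fun j => (s + prefix (fun i => dfcomp a b i xs) l j) ^ 2).
Proof.
  induction l as [|i l IH]; intros s; [reflexivity|].
  simpl prefix_sq_sum; simpl length; rewrite sumR_S_l, IH.
  replace (prefix (fun i0 => dfcomp a b i0 xs) (i :: l) 0) with 0 by reflexivity.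
  f_equal; [ring|]. apply sumR_ext; intros j _.
  unfold prefix; rewrite sumR_S_l; simpl nth; f_equal; ring.
Qed.

(** * Expected suboptimality for an arbitrary stable step size *)

Lemma permutation_sq_error n k a b L xs x0 eta l :
  0 <= eta -> eta * L <= 1 -> Permutation (seq 0 n) l ->
  (forall i, (i < n)%nat -> 0 <= a i <= L) ->
  sumR n (fun i => dfcomp a b i xs) = 0 ->
  (sgd_ss a b eta l k x0 - xs) ^ 2
  <= 2 * exp (- (INR k * (eta * sumR n a))) ^ 2 * (x0 - xs) ^ 2
     + 2 * INR k ^ 2 * eta ^ 4 * L ^ 2 * INR n
       * sumR n (fun j => prefix (fun i => dfcomp a b i xs) l j ^ 2).
Proof.
  intros Heta HetaL Hl Ha Hg0.
  assert (Hsum : forall h, Lsum h l = sumR n h)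
    by (intros h; symmetry; apply Lsum_perm; exact Hl).
  assert (Hal : forall i, In i l -> 0 <= a i <= L).
  { intros i Hi; apply Ha.
    apply (Permutation_in _ (Permutation_sym Hl)), in_seq in Hi; lia. }
  assert (Herr := last_iterate_sq_error a b eta xs L Heta HetaL l k x0 Hal
                    ltac:(rewrite Hsum; exact Hg0)).
  rewrite prefix_sq_sum_eq, <- (Permutation_length Hl), length_seq in Herr.
  rewrite (sumR_ext n _ (fun j => prefix (fun i => dfcomp a b i xs) l j ^ 2)) in Herr
    by (intros; f_equal; ring).
  assert (HQ := factor_bound a eta L Heta HetaL l Hal).
  assert (HQk : (factor a eta l ^ k) ^ 2 <= exp (- (INR k * (eta * sumR n a))) ^ 2).
  { apply pow_incr; split; [apply pow_le; lra|].
    replace (- (INR k * (eta * sumR n a))) with (INR k * - (eta * Lsum a l))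
      by (rewrite Hsum; ring).
    rewrite <- exp_pow. apply pow_incr; split; [lra|].
    apply (factor_exp a eta L Heta HetaL l Hal). }
  assert ((factor a eta l ^ k) ^ 2 * (x0 - xs) ^ 2
          <= exp (- (INR k * (eta * sumR n a))) ^ 2 * (x0 - xs) ^ 2)
    by (apply Rmult_le_compat_r; [apply pow2_ge_0|assumption]).
  nra.
Qed.

Lemma expected_gap_bound n k a b lam L G xs x0 eta P :
  (2 <= n)%nat -> 0 <= lam -> 0 <= eta -> eta * L <= 1 ->
  (forall i, (i < n)%nat -> 0 <= a i <= L) ->
  sumR n (fun i => dfcomp a b i xs) = 0 ->
  (forall i, (i < n)%nat -> Rabs (dfcomp a b i xs) <= G) ->
  perm_enum n P ->
  avg P (fun l => lam / 2 * (sgd_ss a b eta l k x0 - xs) ^ 2)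
  <= lam * exp (- (INR k * (eta * sumR n a))) ^ 2 * (x0 - xs) ^ 2
     + lam * INR k ^ 2 * eta ^ 4 * L ^ 2 * INR n * (INR n ^ 2 * G ^ 2).
Proof.
  intros Hn Hlam Heta HetaL Ha Hg0 HG HP.
  set (g := fun i => dfcomp a b i xs).
  set (c := lam * exp (- (INR k * (eta * sumR n a))) ^ 2 * (x0 - xs) ^ 2).
  set (d := lam * INR k ^ 2 * eta ^ 4 * L ^ 2 * INR n).
  assert (HP0 := P_nonempty n P HP).
  transitivity (avg P (fun l => c + d * sumR n (fun j => prefix g l j ^ 2))).
  - apply avg_le; [exact HP0|]. intros l Hl.
    assert (H := permutation_sq_error n k a b L xs x0 eta l Heta HetaL
                   (proj1 (proj2 HP l) Hl) Ha Hg0).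
    apply Rmult_le_compat_l with (r := lam / 2) in H; [|lra].
    eapply Rle_trans; [exact H|]. right; unfold c, d, g; field.
  - rewrite avg_affine by exact HP0.
    apply Rplus_le_compat_l, Rmult_le_compat_l.
    + assert (0 <= L) by (destruct (Ha 0%nat ltac:(lia)); lra).
      unfold d; repeat apply Rmult_le_pos; try apply pos_INR; lra.
    + apply (prefix_energy n P HP g Hg0 Hn). intros i Hi; rewrite <- pow2_abs.
      apply pow_incr; split; [apply Rabs_pos|apply HG; assumption].
Qed.

(** * The quadratic objective *)

Lemma Fobj_expand n a b x : Fobj n a b x = / INR n * (sumR n a / 2 * x ^ 2 - sumR n b * x).
Proof.
  unfold Fobj, sumR; f_equal. induction (seq 0 n) as [|i l IH]; simpl; [field|].
  rewrite IH; unfold fcomp; field.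
Qed.

Lemma sumR_dfcomp n a b x : sumR n (fun i => dfcomp a b i x) = sumR n a * x - sumR n b.
Proof.
  unfold sumR. induction (seq 0 n) as [|i l IH]; simpl; [ring|].
  rewrite IH; unfold dfcomp; ring.
Qed.

Lemma quadratic_coefficients n a b lam bb : (0 < n)%nat ->
  (forall x, Fobj n a b x = lam / 2 * x ^ 2 - bb * x) ->
  sumR n a = INR n * lam /\ sumR n b = INR n * bb.
Proof.
  intros Hn HF. assert (HnR : 0 < INR n) by (apply lt_0_INR; assumption).
  assert (H1 := HF 1). assert (H2 := HF (-1)). rewrite Fobj_expand in H1, H2.
  assert (Ha : / INR n * sumR n a = lam) by nra.
  assert (Hb : / INR n * sumR n b = bb) by nra.
  rewrite <- Ha, <- Hb; split; field; lra.
Qed.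

Lemma quadratic_minimizer (F : R -> R) lam bb xs : 0 < lam ->
  (forall x, F x = lam / 2 * x ^ 2 - bb * x) -> (forall y, F xs <= F y) -> bb = lam * xs.
Proof.
  intros Hlam HF Hmin. assert (H := Hmin (bb / lam)). rewrite !HF in H.
  assert (Hsq : lam / 2 * (xs - bb / lam) ^ 2 <= 0).
  { replace (lam / 2 * (xs - bb / lam) ^ 2)
      with (lam / 2 * xs ^ 2 - bb * xs - (lam / 2 * (bb / lam) ^ 2 - bb * (bb / lam)))
      by (field; lra). lra. }
  assert (Hsq0 : (xs - bb / lam) ^ 2 <= 0)
    by (apply Rmult_le_reg_l with (lam / 2); lra).
  destruct (Req_dec (xs - bb / lam) 0) as [Hz|Hnz].
  - replace xs with (bb / lam) by lra. field; lra.
  - exfalso; apply (pow_nonzero _ 2 Hnz), Rle_antisym; [exact Hsq0|apply pow2_ge_0].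
Qed.

Lemma quadratic_objective_facts n a b lam bb xs : (0 < n)%nat -> 0 < lam ->
  (forall x, Fobj n a b x = lam / 2 * x ^ 2 - bb * x) ->
  (forall y, Fobj n a b xs <= Fobj n a b y) ->
  (forall x, Fobj n a b x - Fobj n a b xs = lam / 2 * (x - xs) ^ 2)
  /\ sumR n (fun i => dfcomp a b i xs) = 0 /\ sumR n a = INR n * lam.
Proof.
  intros Hn Hlam HF Hmin.
  destruct (quadratic_coefficients n a b lam bb Hn HF) as [HA HB].
  assert (Hxs := quadratic_minimizer (Fobj n a b) lam bb xs Hlam HF Hmin).
  split; [|split; [rewrite sumR_dfcomp, HA, HB, Hxs; ring|exact HA]].
  intros x; rewrite !HF, Hxs; field.
Qed.

(** * The step size *)

Lemma log_factor_bounds n k : (2 <= n)%nat -> (1 <= k)%nat ->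
  0 < ln (sqrt (INR n) * INR k) <= ln (INR n * INR k).
Proof.
  intros Hn Hk.
  assert (HnR : 2 <= INR n) by (replace 2 with (INR 2) by (simpl; lra); apply le_INR; assumption).
  assert (HkR : 1 <= INR k) by (replace 1 with (INR 1) by (simpl; lra); apply le_INR; assumption).
  assert (Hs : sqrt (INR n) * sqrt (INR n) = INR n) by (apply sqrt_sqrt; lra).
  assert (Hs0 := sqrt_pos (INR n)).
  assert (Hs1 : 1 < sqrt (INR n)) by nra.
  split.
  - rewrite <- ln_1; apply ln_increasing; nra.
  - assert (Hsn : sqrt (INR n) <= INR n) by nra.
    destruct (Rle_lt_or_eq_dec (sqrt (INR n) * INR k) (INR n * INR k)) as [Hlt|Heq];
      [apply Rmult_le_compat_r; lra| |].
    + left; apply ln_increasing; nra.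
    + rewrite Heq; lra.
Qed.

Lemma exp_neg_log_factor n k : (1 <= n)%nat -> (1 <= k)%nat ->
  exp (- ln (sqrt (INR n) * INR k)) ^ 2 = / (INR n * INR k ^ 2).
Proof.
  intros Hn Hk.
  assert (HnR : 0 < INR n) by (apply lt_0_INR; lia).
  assert (HkR : 0 < INR k) by (apply lt_0_INR; lia).
  assert (Hs : sqrt (INR n) * sqrt (INR n) = INR n) by (apply sqrt_sqrt; lra).
  assert (Hs0 : 0 < sqrt (INR n)) by (apply sqrt_lt_R0; assumption).
  rewrite exp_Ropp, exp_ln by nra.
  replace (INR n * INR k ^ 2) with ((sqrt (INR n) * INR k) ^ 2)
    by (rewrite <- Hs at 2; ring).
  field; nra.
Qed.

(* The step-size condition L / lam <= N / ell makes every factor 1 - eta a_i nonnegative. *)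
Lemma step_size_stable lam L N ell : 0 < lam -> 0 < N -> 0 < ell ->
  L / lam <= N / ell -> ell / (lam * N) * L <= 1.
Proof.
  intros Hlam HN Hell H.
  apply (Rmult_le_compat_l (ell / N)) in H; [|apply Rlt_le, Rdiv_lt_0_compat; assumption].
  replace (ell / N * (L / lam)) with (ell / (lam * N) * L) in H by (field; lra).
  replace (ell / N * (N / ell)) with 1 in H by (field; lra). exact H.
Qed.

(* The log factor ln (sqrt n k)^4 is absorbed into (1 + ln (n k))^4. *)
Lemma polylog_absorb ell m T1 T2 : 0 <= ell <= m -> 0 <= T1 -> 0 <= T2 ->
  T1 + ell ^ 4 * T2 <= 1 * (1 + m) ^ 4 * (T1 + T2).
Proof.
  intros Hell HT1 HT2.
  assert (HM1 : 1 <= (1 + m) ^ 4) by (rewrite <- (pow1 4); apply pow_incr; lra).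
  assert (HM2 : ell ^ 4 <= (1 + m) ^ 4) by (apply pow_incr; lra).
  nra.
Qed.

Theorem theorem4 :
  exists (C : R) (p : nat),
  forall (n k : nat) (a b : nat -> R) (lam L G bb xs x0 : R)
         (P : list (list nat)),
    (2 <= n)%nat -> (1 <= k)%nat ->
    0 < lam -> 0 < L -> 0 < G ->
    (forall x, Fobj n a b x = lam / 2 * x ^ 2 - bb * x) ->
    (forall i, (i < n)%nat -> 0 <= a i <= L) ->
    (forall y, Fobj n a b xs <= Fobj n a b y) ->
    (forall i, (i < n)%nat -> Rabs (dfcomp a b i xs) <= G) ->
    L / lam <= INR n * INR k / ln (sqrt (INR n) * INR k) ->
    perm_enum n P ->
    let eta := ln (sqrt (INR n) * INR k) / (lam * INR n * INR k) in
    avg P (fun sigma => Fobj n a b (sgd_ss a b eta sigma k x0) - Fobj n a b xs)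
    <= C * (1 + ln (INR n * INR k)) ^ p *
       (lam / (INR n * INR k ^ 2) * (x0 - xs) ^ 2
        + G ^ 2 * L ^ 2 / (lam ^ 3 * INR n * INR k ^ 2)).
Proof.
  exists 1, 4%nat.
  intros n k a b lam L G bb xs x0 P Hn Hk Hlam HL HG HF Ha Hmin Hg Hcond HP eta.
  assert (HnR : 0 < INR n) by (apply lt_0_INR; lia).
  assert (HkR : 0 < INR k) by (apply lt_0_INR; lia).
  destruct (log_factor_bounds n k Hn Hk) as [Hell Hell'].
  set (ell := ln (sqrt (INR n) * INR k)) in *.
  destruct (quadratic_objective_facts n a b lam bb xs ltac:(lia) Hlam HF Hmin)
    as [Hgap [Hg0 HA]].
  assert (Heta : 0 <= eta).
  { unfold eta; apply Rlt_le, Rdiv_lt_0_compat; [exact Hell|].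
    repeat apply Rmult_lt_0_compat; assumption. }
  assert (HetaL : eta * L <= 1) by (unfold eta; rewrite Rmult_assoc; apply step_size_stable; nra).
  rewrite (avg_ext P _ _ (fun l => Hgap _)).
  eapply Rle_trans; [apply (expected_gap_bound n k a b lam L G xs x0 eta P); auto; lra|].
  (* with this step size k eta sum_i a_i = ell, so the contraction is 1 / (n k^2) *)
  replace (INR k * (eta * sumR n a)) with ell by (rewrite HA; unfold eta; field; lra).
  replace (exp (- ell) ^ 2) with (/ (INR n * INR k ^ 2))
    by (symmetry; apply exp_neg_log_factor; lia).
  replace (lam * / (INR n * INR k ^ 2) * (x0 - xs) ^ 2
           + lam * INR k ^ 2 * eta ^ 4 * L ^ 2 * INR n * (INR n ^ 2 * G ^ 2))
    with (lam / (INR n * INR k ^ 2) * (x0 - xs) ^ 2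
          + ell ^ 4 * (G ^ 2 * L ^ 2 / (lam ^ 3 * INR n * INR k ^ 2)))
    by (unfold eta; field; lra).
  apply polylog_absorb; [lra| |].
  - apply Rmult_le_pos; [|apply pow2_ge_0].
    apply Rlt_le, Rdiv_lt_0_compat; [lra|]. apply Rmult_lt_0_compat; [lra|apply pow_lt; lra].
  - apply Rlt_le, Rdiv_lt_0_compat.
    + apply Rmult_lt_0_compat; apply pow_lt; lra.
    + repeat apply Rmult_lt_0_compat; try apply pow_lt; lra.
Qed.
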